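(* Let $X$ be a complete separable metric space, $\Sigma$ a compact Hausdorff group with Haar probability measure $\mu_\Sigma$ acting measurably on $X$ via $T_\sigma$, and $\Gamma\subset C_b(X)$. 1. If $\Gamma$ is admissible then $\Gamma^{\mathrm{inv}}_\Sigma$ is admissible. 2. If $\Gamma$ is strictly admissible and $S_\Sigma[\Gamma]\subset\Gamma$ then $\Gamma^{\mathrm{inv}}_\Sigma$ is $\Sigma$-strictly admissible.
   Context: $C_b(X)$: bounded continuous functions. $S_\Sigma[\gamma](x)=\int_\Sigma\gamma(T_\sigma(x))\mu_\Sigma(d\sigma)$; $\Gamma^{\mathrm{inv}}_\Sigma=\{\gamma\in\Gamma:\gamma\circ T_\sigma=\gamma\ \forall\sigma\}$; $\mathcal{P}_\Sigma(X)$ is the set of probability measures $P$ with $P\circ T_\sigma^{-1}=P$ for all $\sigma$. For $\mathcal{Q}\subset\mathcal{P}(X)$, a set $\Psi\subset\mathcal{M}_b(X)$ is $\mathcal{Q}$-determining if for $Q,P\in\mathcal{Q}$, $E_Q[\psi]=E_P[\psi]$ for all $\psi\in\Psi$ implies $Q=P$. The $M(X)$-topology on $C_b(X)$ is the weakest topology making $\gamma\mapsto\int\gamma d\nu$ continuous for every finite signed measure $\nu$. $\Gamma\subset C_b(X)$ is admissible if $0\in\Gamma$, $\Gamma$ is convex, and $\Gamma$ is closed in the $M(X)$-topology; strictly admissible if moreover there is a $\mathcal{P}(X)$-determining $\Psi\subset C_b(X)$ such that for each $\psi\in\Psi$ there are $c\in\mathbb{R}$, $\epsilon>0$ with $c\pm\epsilon\psi\in\Gamma$.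 An admissible $\Gamma\subset C_b(X)$ consisting of $\Sigma$-invariant functions is $\Sigma$-strictly admissible if there is a $\mathcal{P}_\Sigma(X)$-determining $\Psi\subset C_b(X)$ such that for each $\psi\in\Psi$ there are $c\in\mathbb{R}$, $\epsilon>0$ with $c\pm\epsilon\psi\in\Gamma$. *)

From HB Require Import structures.
From mathcomp Require Import all_boot all_order all_algebra.
From mathcomp Require Import all_classical all_reals all_analysis.
Set Implicit Arguments. Unset Strict Implicit. Unset Printing Implicit Defensive.
Import Order.TTheory GRing.Theory Num.Theory.
Local Open Scope classical_set_scope.
Local Open Scope ring_scope.

Definition borel (T : ptopologicalType) := g_sigma_algebraType (@open T).

Section Defs.
Context {R : realType}.

Definition separable_space (T : topologicalType) :=
  exists D : set T, countable D /\ closure D = setT.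

Definition Cb (X : topologicalType) : set (X -> R) :=
  [set f | continuous f /\ exists M : R, forall x, `|f x| <= M].
Arguments Cb X : clear implicits.

Section OnX.
Variable X : ptopologicalType.

(* Integral of g against the finite signed measure nu = mp - mn
   (every finite signed measure is of this form, by Jordan decomposition). *)
Definition sint (mp mn : {finite_measure set (borel X) -> \bar R}) (g : X -> R) : R :=
  fine (\int[mp]_x (g x)%:E)%E - fine (\int[mn]_x (g x)%:E)%E.

(* Gam is closed in C_b(X) for the M(X)-topology, i.e. the weakest topology
   making g |-> \int g dnu continuous for every finite signed measure nu.
   A basic neighbourhood of g is given by finitely many signed measures
   nu_0,...,nu_{n-1} and eps > 0. *)
Definition Mclosed (Gam : set (X -> R)) :=
  forall g, Cb X g ->
    (forall (n : nat) (mp mn : nat -> {finite_measure set (borel X) -> \bar R})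
            (eps : R), 0 < eps ->
       exists2 g', Gam g' &
         forall i, (i < n)%N -> `|sint (mp i) (mn i) g - sint (mp i) (mn i) g'| < eps) ->
    Gam g.

Definition convex_fset (Gam : set (X -> R)) :=
  forall f g (t : R), Gam f -> Gam g -> 0 <= t <= 1 ->
    Gam (fun x => t * f x + (1 - t) * g x).

Definition admissible (Gam : set (X -> R)) :=
  [/\ Gam (fun _ => 0), convex_fset Gam & Mclosed Gam].

Definition determining (Q : set (probability (borel X) R)) (Psi : set (X -> R)) :=
  forall P1 P2, Q P1 -> Q P2 ->
    (forall psi, Psi psi ->
       (\int[P1]_x (psi x)%:E = \int[P2]_x (psi x)%:E)%E) ->
    forall A : set (borel X), measurable A -> P1 A = P2 A.

Definition bracket (Gam : set (X -> R)) (psi : X -> R) :=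
  exists (c : R) (eps : R), 0 < eps /\
    Gam (fun x => c + eps * psi x) /\ Gam (fun x => c - eps * psi x).

Definition strictly_admissible (Gam : set (X -> R)) :=
  admissible Gam /\
  exists Psi : set (X -> R), [/\ Psi `<=` Cb X, determining setT Psi &
    forall psi, Psi psi -> bracket Gam psi].

Variables (S : Type) (T : S -> X -> X).

Definition inv_part (Gam : set (X -> R)) : set (X -> R) :=
  [set g | Gam g /\ forall s, g \o T s = g].

Definition inv_prob : set (probability (borel X) R) :=
  [set P | forall s (A : set (borel X)), measurable A -> P (T s @^-1` A) = P A].

Definition Sigma_strictly_admissible (Gam : set (X -> R)) :=
  [/\ admissible Gam, (forall g, Gam g -> forall s, g \o T s = g) &
    exists Psi : set (X -> R), [/\ Psi `<=` Cb X, determining inv_prob Psi &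
      forall psi, Psi psi -> bracket Gam psi]].

End OnX.

Definition is_group {S : Type} (mul : S -> S -> S) (inv : S -> S) (e : S) :=
  [/\ (forall x y z, mul x (mul y z) = mul (mul x y) z),
      (forall x, mul e x = x), (forall x, mul x e = x),
      (forall x, mul (inv x) x = e) & (forall x, mul x (inv x) = e)].

Definition compact_hausdorff_group (S : ptopologicalType)
    (mul : S -> S -> S) (inv : S -> S) (e : S) :=
  [/\ is_group mul inv e, continuous (fun p : S * S => mul p.1 p.2),
      continuous inv, compact [set: S] & hausdorff_space S].

Definition haar_probability (S : ptopologicalType) (mul : S -> S -> S)
    (mu : probability (borel S) R) :=
  forall (s : S) (A : set (borel S)), measurable A ->
    mu [set t | A (mul s t)] = mu A /\ mu [set t | A (mul t s)] = mu A.

Definition measurable_action (S X : ptopologicalType) (mul : S -> S -> S) (e : S)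
    (T : S -> X -> X) :=
  [/\ (forall x, T e x = x), (forall s t x, T (mul s t) x = T s (T t x)) &
      measurable_fun [set: borel S * borel X]
        (fun p : borel S * borel X => (T p.1 p.2 : borel X))].

Definition S_avg (S X : ptopologicalType) (mu : probability (borel S) R)
    (T : S -> X -> X) (g : X -> R) : X -> R :=
  fun x => fine (\int[mu]_s (g (T s x))%:E)%E.

End Defs.
Arguments Cb {R} X.

From HB Require Import structures.
From mathcomp Require Import all_boot all_order all_algebra.
From mathcomp Require Import all_classical all_reals all_analysis.
From mathcomp Require Import measurable_realfun.
Import Order.TTheory GRing.Theory Num.Theory numFieldNormedType.Exports.
Local Open Scope classical_set_scope.
Local Open Scope ring_scope.

(* Point evaluations are continuous for the M(X)-topology (integrate against
   Dirac masses), so the identities g (T_s x) = g x survive M(X)-closures: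
   this is part 1.  For part 2 take Psi' := S_Sigma[Psi].  Averaging commutes
   with affine maps, so c +- eps S_Sigma[psi] = S_Sigma[c +- eps psi] lies in
   Gamma, and it is invariant by right invariance of the Haar measure.  For a
   Sigma-invariant P, Fubini gives E_P[S_Sigma[psi]] = E_P[psi], so Psi'
   determines P_Sigma(X) because Psi determines P(X). *)

Section Generalities.
Context {R : realType}.

(* [g] lies in the M(X)-closure of [A]; [Mclosed Gam] unfolds to
   [forall g, Cb X g -> Madherent Gam g -> Gam g]. *)
Definition Madherent {X : ptopologicalType} (A : set (X -> R)) (g : X -> R) :=
  forall (n : nat) (mp mn : nat -> {finite_measure set (borel X) -> \bar R})
         (eps : R), 0 < eps ->
    exists2 g', A g' &
      forall i, (i < n)%N -> `|sint (mp i) (mn i) g - sint (mp i) (mn i) g'| < eps.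

Lemma Madherent_sub {X : ptopologicalType} (A B : set (X -> R)) (g : X -> R) :
  A `<=` B -> Madherent A g -> Madherent B g.
Proof.
move=> AB gA n mp mn eps eps_gt0.
by have [g' /AB Bg' close] := gA n mp mn eps eps_gt0; exists g'.
Qed.

Lemma continuous_measurable {A B : ptopologicalType} (f : A -> B) :
  continuous f -> measurable_fun [set: borel A] (f : borel A -> borel B).
Proof.
move=> /continuousP cf.
apply: (@measurability _ _ (borel A) (borel B) setT f open) => //.
by move=> _ [U oU <-]; rewrite setTI; apply: sub_sigma_algebra; apply: cf.
Qed.

Lemma continuous_measurableR {X : ptopologicalType} (g : X -> R) :
  continuous g -> measurable_fun [set: borel X] (g : borel X -> R).
Proof.
move=> /continuousP cg; apply: (measurability _ (RGenOpens.measurableE R)).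
move=> _ [_ [a [b ->] <-]]; rewrite setTI.
by apply: sub_sigma_algebra; apply: cg; exact: interval_open.
Qed.

Lemma Cb_measurable {X : ptopologicalType} {g : X -> R} :
  Cb X g -> measurable_fun [set: borel X] (g : borel X -> R).
Proof. by move=> [/continuous_measurableR]. Qed.

Lemma sint_dirac {X : ptopologicalType} (a b : X) (g : X -> R) :
  measurable_fun [set: borel X] (g : borel X -> R) ->
  sint (\d_(a : borel X) : {finite_measure set (borel X) -> \bar R})
       \d_(b : borel X) g = g a - g b.
Proof.
move=> mg; have mEg : measurable_fun [set: borel X] (fun x => (g x)%:E).
  exact/measurable_EFinP.
by rewrite /sint !(integral_dirac _ measurableT mEg) /= !indicE !in_setT !mul1r.
Qed.

Lemma Madherent_eq {X : ptopologicalType} {A : set (X -> R)} {g : X -> R} {a b : X} :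
  (forall h, A h -> measurable_fun [set: borel X] (h : borel X -> R)) ->
  measurable_fun [set: borel X] (g : borel X -> R) ->
  (forall h, A h -> h a = h b) -> Madherent A g -> g a = g b.
Proof.
move=> mA mg Aab gA; apply/eqP; rewrite -subr_eq0; apply/negP => gab_neq0.
have gab_gt0 : 0 < `|g a - g b| by rewrite normr_gt0; exact/negP.
have [g' Ag' close] :=
  gA 1%N (fun=> \d_(a : borel X)) (fun=> \d_(b : borel X)) _ gab_gt0.
have mg' := mA _ Ag'; have := close 0%N isT.
by rewrite !sint_dirac // (Aab g' Ag') subrr subr0 ltxx.
Qed.

Lemma Cb_affine_cancel {Y : topologicalType} (c a : R) (f : Y -> R) :
  a != 0 -> Cb Y (fun y => c + a * f y) -> Cb Y f.
Proof.
move=> a_neq0 [cG [M GM]].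
have -> : f = fun y => a^-1 * ((c + a * f y) - c).
  by apply/funext => y; rewrite addrAC subrr add0r mulKf.
split.
- move=> y; apply: (@continuousM R Y (cst a^-1)); first exact: cst_continuous.
  exact: (@continuousB R R^o Y _ (cst c) y (cG y) (@cst_continuous Y R^o c y)).
- exists (`|a^-1| * (M + `|c|)) => y; rewrite normrM ler_wpM2l //.
  by apply: le_trans (ler_normB _ _) _; rewrite lerD2r GM.
Qed.

Lemma probability_integrable_bounded d (Y : measurableType d)
    (Q : probability Y R) (h : Y -> R) (M : R) :
  measurable_fun setT h -> (forall y, `|h y| <= M) ->
  Q.-integrable setT (EFin \o h).
Proof.
move=> mh hM; apply: measurable_bounded_integrable => //.
- by apply: (le_lt_trans (probability_le1 _ measurableT)); rewrite ltry.
- exists M; split; first by rewrite num_real.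
  by move=> N MN y _; apply: le_trans (hM _) (ltW MN).
Qed.

Lemma integral_comp_preserving {d} {Y : measurableType d} {P : probability Y R}
    {phi : Y -> Y} {h : Y -> R} {M : R} :
  measurable_fun setT phi -> (forall A, measurable A -> P (phi @^-1` A) = P A) ->
  measurable_fun setT h -> (forall y, `|h y| <= M) ->
  (\int[P]_y (h (phi y))%:E = \int[P]_y (h y)%:E)%E.
Proof.
move=> mphi Pphi mh hM.
have mEh : measurable_fun setT (EFin \o h) by exact/measurable_EFinP.
have inthphi : P.-integrable (phi @^-1` setT) ((EFin \o h) \o phi).
  rewrite preimage_setT; suff : P.-integrable setT (EFin \o (h \o phi)) by [].
  apply: probability_integrable_bounded => [|y]; last exact: hM.
  exact: measurableT_comp mh mphi.
have := integral_pushforward mphi mEh inthphi measurableT.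
rewrite preimage_setT => <-.
by apply: eq_measure_integral => A mA _; exact: Pphi.
Qed.

End Generalities.

Section InvariantPart.
Context {R : realType} (X : ptopologicalType) (S : Type) (T : S -> X -> X).
Implicit Type Gam : set (X -> R).

Lemma invariantE (g : X -> R) s x : g \o T s = g -> g (T s x) = g x.
Proof. by move/(congr1 (@^~ x)). Qed.

Lemma convex_fset_inv_part Gam : convex_fset Gam -> convex_fset (inv_part T Gam).
Proof.
move=> Gcvx f g t [Gf fT] [Gg gT] t01; split; first exact: Gcvx.
by move=> s; apply/funext => x /=; rewrite !invariantE.
Qed.

Lemma Mclosed_inv_part Gam : Gam `<=` Cb X -> Mclosed Gam -> Mclosed (inv_part T Gam).
Proof.
move=> GCb Gcl g Cg gA; split.
  by apply: Gcl => //; apply: Madherent_sub gA => h [].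
move=> s; apply/funext => x /=; apply: (Madherent_eq _ (Cb_measurable Cg) _ gA).
- by move=> h [/GCb/Cb_measurable].
- by move=> h [_ hT]; rewrite invariantE.
Qed.

Lemma admissible_inv_part Gam :
  Gam `<=` Cb X -> admissible Gam -> admissible (inv_part T Gam).
Proof.
move=> GCb [G0 Gcvx Gcl]; split.
- by split.
- exact: convex_fset_inv_part.
- exact: Mclosed_inv_part.
Qed.

End InvariantPart.

Section Averaging.
Context {R : realType} {S X : ptopologicalType} {mu : probability (borel S) R}
  {T : S -> X -> X}.
Hypothesis T_measurable : measurable_fun [set: borel S * borel X]
  (fun p : borel S * borel X => (T p.1 p.2 : borel X)).

Local Notation avg := (S_avg mu T).

Lemma measurable_orbit x : measurable_fun [set: borel S] (fun s => (T s x : borel X)).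
Proof.
exact: (measurable_fun_pair1
  (f := fun p : borel S * borel X => (T p.1 p.2 : borel X)) x T_measurable).
Qed.

Lemma measurable_T s : measurable_fun [set: borel X] (fun x => (T s x : borel X)).
Proof.
exact: (measurable_fun_pair2
  (f := fun p : borel S * borel X => (T p.1 p.2 : borel X)) s T_measurable).
Qed.

Lemma integrable_orbit {g : X -> R} x :
  Cb X g -> mu.-integrable [set: borel S] (EFin \o (fun s => g (T s x))).
Proof.
move=> Cg; have [_ [M gM]] := Cg.
apply: probability_integrable_bounded => [|s]; last exact: gM.
exact: measurableT_comp (Cb_measurable Cg) (measurable_orbit x).
Qed.

Lemma S_avg_affine (g : X -> R) (c a : R) : Cb X g ->
  avg (fun x => c + a * g x) = fun x => c + a * avg g x.
Proof.
move=> Cg; apply/funext => x; have intg := integrable_orbit x Cg.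
change (\int[mu]_(s in setT) (c + a * g (T s x))
        = c + a * \int[mu]_(s in setT) g (T s x)).
rewrite RintegralD //; last exact: (integrableZl measurableT a (integrable_orbit x Cg)).
  rewrite RintegralZl // Rintegral_cst //.
  by rewrite [X in fine X](_ : _ = 1%E) ?mulr1 //; exact: probability_setT.
exact: finite_measure_integrable_cst.
Qed.

Lemma integral_S_avg {g : X -> R} {P : probability (borel X) R} :
  Cb X g -> inv_prob T P ->
  (\int[P]_x (avg g x)%:E = \int[P]_x (g x)%:E)%E.
Proof.
move=> Cg Pinv; have [_ [M gM]] := Cg; have mg := Cb_measurable Cg.
pose f := fun z : borel S * borel X => (g (T z.1 z.2))%:E.
have intf : (mu \x P)%E.-integrable setT f.
  apply: probability_integrable_bounded => [|z]; last exact: gM.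
  exact: measurableT_comp mg T_measurable.
transitivity (\int[P]_x \int[mu]_s f (s, x))%E.
  apply: eq_integral => x _; rewrite /S_avg fineK //.
  exact: (integrable_fin_num measurableT (integrable_orbit x Cg)).
rewrite -(Fubini intf).
transitivity (\int[mu]_s (\int[P]_x (g x)%:E))%E; last first.
  rewrite integral_cst //.
  by rewrite [X in (_ * X)%E](_ : _ = 1%E) ?mule1 //; exact: probability_setT.
apply: eq_integral => s _.
exact: integral_comp_preserving (measurable_T s) (Pinv s) mg gM.
Qed.

Lemma determining_S_avg (Psi : set (X -> R)) :
  Psi `<=` Cb X -> determining setT Psi -> determining (inv_prob T) (avg @` Psi).
Proof.
move=> PsiCb Psi_det P1 P2 P1inv P2inv P12 A mA; apply: Psi_det => // psi Psi_psi.
have Cpsi := PsiCb _ Psi_psi.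
rewrite -(integral_S_avg Cpsi P1inv) -(integral_S_avg Cpsi P2inv).
by apply: P12; exists psi.
Qed.

Context {mul : S -> S -> S}.
Hypothesis T_mul : forall s t x, T (mul s t) x = T s (T t x).
Hypothesis mul_continuous : continuous (fun p : S * S => mul p.1 p.2).
Hypothesis mu_right_invariant : forall t (A : set (borel S)),
  measurable A -> mu [set s | A (mul s t)] = mu A.

Lemma measurable_mulr t : measurable_fun [set: borel S] (fun s => mul s t : borel S).
Proof.
apply: continuous_measurable => s.
apply: (continuous_comp (f := fun s => (s, t)) (g := fun p : S * S => mul p.1 p.2)).
  by apply: cvg_pair; [exact: cvg_id | exact: cvg_cst].
exact: mul_continuous.
Qed.

Lemma S_avg_invariant (g : X -> R) t : Cb X g -> avg g \o T t = avg g.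
Proof.
move=> Cg; apply/funext => x; rewrite /S_avg /=; congr fine.
have [_ [M gM]] := Cg.
have mgx : measurable_fun [set: borel S] (fun s => g (T s x)).
  exact: measurableT_comp (Cb_measurable Cg) (measurable_orbit x).
rewrite -(integral_comp_preserving (measurable_mulr t) (mu_right_invariant t) mgx
  (fun s => gM (T s x))).
by apply: eq_integral => s _; rewrite T_mul.
Qed.

Context {Gam : set (X -> R)}.
Hypothesis Gam_Cb : Gam `<=` Cb X.
Hypothesis Gam_S_avg : forall g, Gam g -> Gam (S_avg mu T g).

(* S_Sigma[psi] is not shown to be continuous directly: this is read off from
   S_Sigma[c + eps psi] in Gamma. *)
Lemma Cb_S_avg_bracket psi : Cb X psi -> bracket Gam psi -> Cb X (avg psi).
Proof.
move=> Cpsi [c [eps [eps_gt0 [Gplus _]]]].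
apply: (Cb_affine_cancel c eps); first by rewrite gt_eqF.
by rewrite -S_avg_affine //; exact/Gam_Cb/Gam_S_avg.
Qed.

Lemma bracket_inv_part_S_avg psi :
  Cb X psi -> bracket Gam psi -> bracket (inv_part T Gam) (avg psi).
Proof.
move=> Cpsi [c [eps [eps_gt0 [Gplus Gminus]]]].
have avg_inv : forall g, Gam g -> inv_part T Gam (avg g).
  by move=> g Gg; split=> [|t]; [exact: Gam_S_avg | exact/S_avg_invariant/Gam_Cb].
exists c, eps; split=> //; split.
- by rewrite -S_avg_affine //; exact: avg_inv.
- have minusE f : (fun x => c - eps * f x) = (fun x => c + (- eps) * f x).
    by apply/funext => x; rewrite mulNr.
  rewrite minusE -S_avg_affine //; apply: avg_inv.
  by rewrite -minusE.
Qed.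

Lemma Sigma_strictly_admissible_inv_part :
  strictly_admissible Gam -> Sigma_strictly_admissible T (inv_part T Gam).
Proof.
move=> [Gadm [Psi [Psi_Cb Psi_det Psi_bracket]]]; split.
- exact: admissible_inv_part.
- by move=> g [].
exists (avg @` Psi); split.
- by move=> _ [psi Psi_psi <-]; apply: Cb_S_avg_bracket; auto.
- exact: determining_S_avg.
- by move=> _ [psi Psi_psi <-]; apply: bracket_inv_part_S_avg; auto.
Qed.

End Averaging.

Theorem lemma4 (R : realType) (X : completePseudoMetricType R)
  (S : ptopologicalType) (mul : S -> S -> S) (inv : S -> S) (e : S)
  (mu : probability (borel S) R) (T : S -> X -> X) (Gam : set (X -> R)) :
  hausdorff_space X -> separable_space X ->
  compact_hausdorff_group mul inv e -> haar_probability mul mu ->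
  measurable_action mul e T ->
  Gam `<=` Cb X ->
  (admissible Gam -> admissible (inv_part T Gam)) /\
  (strictly_admissible Gam ->
   (forall g, Gam g -> Gam (S_avg mu T g)) ->
   Sigma_strictly_admissible T (inv_part T Gam)).
Proof.
move=> _ _ [_ mul_continuous _ _ _] haar [_ T_mul T_measurable] Gam_Cb.
split; first exact: admissible_inv_part.
move=> Gam_strict Gam_S_avg.
apply: (Sigma_strictly_admissible_inv_part (mu := mu) T_measurable T_mul
  mul_continuous) => //.
by move=> t A mA; have [_ ->] := haar t A mA.
Qed.
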